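(* Let $\mathbb K$ be a field with $2\in\mathbb K^\times$ and $A$ a unital commutative associative $\mathbb K$-algebra with unit $\mathbf 1$. The linear map $\gamma_A:\Lambda^2(A)\to\Omega^1(A)$, $a\wedge b\mapsto a\,d_A(b)-b\,d_A(a)$, is surjective and $\ker\gamma_A=T_0(A)$.
   Context: $(\Omega^1(A),d_A)$ is the universal differential module of $A$: $\Omega^1(A)$ is an $A$-module and $d_A:A\to\Omega^1(A)$ a derivation such that every derivation into an $A$-module factors uniquely through an $A$-module map. $T_0(A)$ is the linear span of $ab\wedge c+bc\wedge a+ca\wedge b-abc\wedge\mathbf 1$ for $a,b,c\in A$. *)

From HB Require Import structures.
From mathcomp Require Import all_boot all_order all_algebra.
Set Implicit Arguments. Unset Strict Implicit. Unset Printing Implicit Defensive.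
Import GRing.Theory.
Local Open Scope ring_scope.

Definition klinear (K : fieldType) (U V : lmodType K) (f : U -> V) : Prop :=
  forall (k : K) (x y : U), f (k *: x + y) = k *: f x + f y.

Definition alt_bilinear (K : fieldType) (U M : lmodType K) (f : U -> U -> M) : Prop :=
  (forall b, klinear (fun a => f a b)) /\ (forall a, klinear (f a)) /\ (forall a, f a a = 0).

Definition is_ext_square (K : fieldType) (U L : lmodType K) (w : U -> U -> L) : Prop :=
  alt_bilinear w /\
  forall (M : lmodType K) (f : U -> U -> M), alt_bilinear f ->
    (exists g : L -> M, klinear g /\ forall a b, g (w a b) = f a b) /\
    (forall g1 g2 : L -> M, klinear g1 -> klinear g2 ->
       (forall a b, g1 (w a b) = f a b) -> (forall a b, g2 (w a b) = f a b) ->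
       forall x, g1 x = g2 x).

Definition Alinear (A : comNzRingType) (M N : lmodType A) (f : M -> N) : Prop :=
  forall (a : A) (x y : M), f (a *: x + y) = a *: f x + f y.

(* K-derivation of the K-algebra A into the A-module M
   (M is a K-module through k |-> k%:A). *)
Definition is_derivation (K : fieldType) (A : comAlgType K) (M : lmodType A)
    (D : A -> M) : Prop :=
  (forall (k : K) (a b : A), D (k *: a + b) = (k%:A) *: D a + D b) /\
  (forall a b : A, D (a * b) = a *: D b + b *: D a).

Definition is_univ_diff (K : fieldType) (A : comAlgType K) (Om : lmodType A)
    (d : A -> Om) : Prop :=
  is_derivation d /\
  forall (M : lmodType A) (D : A -> M), is_derivation D ->
    (exists f : Om -> M, Alinear f /\ forall a, f (d a) = D a) /\
    (forall f1 f2 : Om -> M, Alinear f1 -> Alinear f2 ->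
       (forall a, f1 (d a) = D a) -> (forall a, f2 (d a) = D a) ->
       forall x, f1 x = f2 x).

Definition T0gen (K : fieldType) (A : comAlgType K) (L : lmodType K)
    (w : A -> A -> L) (a b c : A) : L :=
  w (a * b) c + w (b * c) a + w (c * a) b - w (a * b * c) 1.

Definition in_T0 (K : fieldType) (A : comAlgType K) (L : lmodType K)
    (w : A -> A -> L) (x : L) : Prop :=
  exists s : seq (K * (A * A * A)),
    x = \sum_(t <- s) t.1 *: T0gen w t.2.1.1 t.2.1.2 t.2.2.

(* Since d(1) = 0, γ kills the generators of T₀(A), so it factors through L/T₀.
   Modulo T₀ the formula a·(b∧c) = (ab∧c + b∧ac)/2, which is alternating in b, c,
   becomes an A-module structure on L/T₀, and b ↦ [1∧b] is a derivation into it;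
   the universal property of Ω¹(A) gives an A-linear ψ with ψ (γ x) = [x].  The
   map L/T₀ → Ω¹(A) induced by γ is A-linear and sends ψ (d a) = [1∧a] back to
   d a, so by universality it is a left inverse of ψ.  Hence γ is onto, and
   γ x = 0 forces [x] = ψ 0 = 0. *)

From HB Require Import structures.
From mathcomp Require Import all_boot all_order all_algebra.
From mathcomp Require Import generic_quotient ring_quotient ring boolp.
Set Implicit Arguments. Unset Strict Implicit. Unset Printing Implicit Defensive.
Import GRing.Theory.
Local Open Scope ring_scope.
Local Open Scope quotient_scope.

Inductive lmod_term (R : Type) : Type :=
  | LAtom of nat
  | LZero
  | LAdd of lmod_term R & lmod_term R
  | LOpp of lmod_term R
  | LScale of R & lmod_term R.

Section LmodTerm.
Variables (R : pzRingType) (V : lmodType R).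

Fixpoint lmod_eval (env : seq V) (e : lmod_term R) : V :=
  match e with
  | LAtom i => env`_i
  | LZero => 0
  | LAdd e1 e2 => lmod_eval env e1 + lmod_eval env e2
  | LOpp e1 => - lmod_eval env e1
  | LScale r e1 => r *: lmod_eval env e1
  end.

Fixpoint lmod_coef (e : lmod_term R) (i : nat) : R :=
  match e with
  | LAtom j => if j == i then 1 else 0
  | LZero => 0
  | LAdd e1 e2 => lmod_coef e1 i + lmod_coef e2 i
  | LOpp e1 => - lmod_coef e1 i
  | LScale r e1 => r * lmod_coef e1 i
  end.

Lemma lmod_evalE env e :
  lmod_eval env e = \sum_(i < size env) lmod_coef e i *: env`_i.
Proof.
elim: e => [j||e1 IH1 e2 IH2|e1 IH1|r e1 IH1] /=.
- have [lt_j|le_j] := ltnP j (size env).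
    rewrite (bigD1 (Ordinal lt_j)) //= eqxx scale1r big1 ?addr0 // => i.
    by rewrite -val_eqE eq_sym => /negbTE /= ->; rewrite scale0r.
  rewrite nth_default // big1 // => i _.
  by rewrite (gtn_eqF (leq_trans (ltn_ord i) le_j)) scale0r.
- by rewrite big1 // => i _; rewrite scale0r.
- by rewrite IH1 IH2 -big_split; apply: eq_bigr => i _; rewrite scalerDl.
- by rewrite IH1 -sumrN; apply: eq_bigr => i _; rewrite scaleNr.
- by rewrite IH1 scaler_sumr; apply: eq_bigr => i _; rewrite scalerA.
Qed.

Lemma lmod_eval_eq env e1 e2 :
  map (lmod_coef e1) (iota 0 (size env)) = map (lmod_coef e2) (iota 0 (size env)) ->
  lmod_eval env e1 = lmod_eval env e2.
Proof.
move=> /(congr1 (fun s => nth 0 s _)) coefE; rewrite !lmod_evalE.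
apply: eq_bigr => i _; have := coefE i.
by rewrite !(nth_map 0) ?size_iota // nth_iota // => ->.
Qed.

End LmodTerm.

(* [lmod_ring R] proves an identity between R-linear combinations of atoms in an
   R-module by comparing coefficients, with [ring] or [field] (whose side
   conditions must be hypotheses).  Atoms are compared up to unification, since
   rewriting can leave convertible but syntactically different copies of a term. *)
Ltac lmod_same t u := constr:(ltac:(first [unify t u; exact true | exact false]) : bool).

Ltac lmod_add_atom t env :=
  lazymatch env with
  | nil => constr:(t :: env)
  | cons ?u ?env' =>
    lazymatch lmod_same t u with
    | true => env
    | false => let env' := lmod_add_atom t env' in constr:(u :: env')
    end
  end.

Ltac lmod_atoms t env :=
  lazymatch t with
  | @GRing.add _ ?a ?b => let env := lmod_atoms a env in lmod_atoms b env
  | @GRing.opp _ ?a => lmod_atoms a env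
  | @GRing.scale _ _ _ ?a => lmod_atoms a env
  | @GRing.zero _ => env
  | _ => lmod_add_atom t env
  end.

Ltac lmod_index t env :=
  lazymatch env with
  | cons ?u ?env' =>
    lazymatch lmod_same t u with
    | true => constr:(O)
    | false => let n := lmod_index t env' in constr:(S n)
    end
  end.

Ltac lmod_reify R t env :=
  lazymatch t with
  | @GRing.add _ ?a ?b =>
    let x := lmod_reify R a env in let y := lmod_reify R b env in constr:(@LAdd R x y)
  | @GRing.opp _ ?a => let x := lmod_reify R a env in constr:(@LOpp R x)
  | @GRing.scale _ _ ?r ?a => let x := lmod_reify R a env in constr:(@LScale R r x)
  | @GRing.zero _ => constr:(@LZero R)
  | _ => let i := lmod_index t env in constr:(@LAtom R i)
  end.

Ltac lmod_ring R :=
  lazymatch goal with |- ?lhs = ?rhs =>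
    let T := type of lhs in
    let env := lmod_atoms lhs (@nil T) in
    let env := lmod_atoms rhs env in
    let e1 := lmod_reify R lhs env in
    let e2 := lmod_reify R rhs env in
    change (lmod_eval env e1 = lmod_eval env e2); apply: lmod_eval_eq; cbn;
    repeat (apply: (congr2 cons); first solve [ring | field; assumption]);
    reflexivity
  end.

(* [wedge_ring R w wedgeC] first identifies the atoms [w a b] and [w c d] whose
   arguments agree up to [ring], either directly or after swapping them. *)
Ltac wedge_merge w wedgeC x y :=
  lazymatch x with w _ _ =>
  lazymatch y with w _ _ =>
    first [ have -> : y = x by congr (w _ _); ring
          | have -> : y = - x by rewrite wedgeC; congr (- w _ _); ring ]
  end end.

Ltac wedge_merge_all w wedgeC env :=
  lazymatch env with
  | nil => idtac
  | cons ?x ?env' =>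
    let rec merge_with env := lazymatch env with
      | nil => idtac
      | cons ?y ?env'' => try wedge_merge w wedgeC x y; merge_with env''
      end in
    merge_with env'; wedge_merge_all w wedgeC env'
  end.

Ltac wedge_ring R w wedgeC :=
  lazymatch goal with |- ?lhs = ?rhs =>
    let T := type of lhs in
    let env := lmod_atoms lhs (@nil T) in
    let env := lmod_atoms rhs env in
    wedge_merge_all w wedgeC env; lmod_ring R
  end.

Section Span.
Variables (R : pzRingType) (V : lmodType R) (X : Type) (g : X -> V).

Definition lin_span : {pred V} :=
  fun x => `[< exists s : seq (R * X), x = \sum_(t <- s) t.1 *: g t.2 >].

Lemma lin_spanP x :
  reflect (exists s : seq (R * X), x = \sum_(t <- s) t.1 *: g t.2) (x \in lin_span).
Proof. exact: asboolP. Qed.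

Lemma lin_span_ind (P : V -> Prop) :
  P 0 -> (forall k t x, P x -> P (k *: g t + x)) -> {in lin_span, forall x, P x}.
Proof.
move=> P0 PS x /lin_spanP[s ->]; elim: s => [|t s IHs]; first by rewrite big_nil.
by rewrite big_cons; apply: PS.
Qed.

Lemma lin_span_submod_closed : subsemimod_closed lin_span.
Proof.
split; first split.
- by apply/lin_spanP; exists [::]; rewrite big_nil.
- move=> x y /lin_spanP[s ->] /lin_spanP[s' ->].
  by apply/lin_spanP; exists (s ++ s'); rewrite big_cat.
move=> k x /lin_spanP[s ->]; apply/lin_spanP; exists [seq (k * t.1, t.2) | t <- s].
by rewrite big_map scaler_sumr; apply: eq_bigr => t _; rewrite scalerA.
Qed.

HB.instance Definition _ := GRing.isSubmodClosed.Build R V lin_span lin_span_submod_closed.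

Lemma lin_span_gen t : g t \in lin_span.
Proof. by apply/lin_spanP; exists [:: (1, t)]; rewrite big_seq1 scale1r. Qed.

End Span.

Section SpanQuotient.
Variables (R : pzRingType) (V : lmodType R) (X : Type) (g : X -> V).

Local Notation S := (lin_span g).
Local Notation Q := (Quotient.quot S).

Lemma quot_eqP x y : reflect (x - y \in S) (\pi_Q x == \pi_Q y).
Proof. by rewrite -Quotient.idealrBE; apply: idP. Qed.

Lemma quot_eq0P x : reflect (x \in S) (\pi_Q x == 0).
Proof. by rewrite -pi_zeror; apply: (iffP (quot_eqP _ _)); rewrite subr0. Qed.

Definition quot_scale (k : R) : Q -> Q := lift_op1 Q ( *:%R k).

Lemma pi_scale k : {morph \pi_Q : x / k *: x >-> quot_scale k x}.
Proof.
move=> x; unlock quot_scale; apply/eqP/quot_eqP; rewrite -scalerBr.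
by apply: rpredZ; apply/quot_eqP; rewrite reprK.
Qed.
Canonical pi_scale_morph k := PiMorph1 (pi_scale k).

Lemma quot_scaleA a b (q : Q) : quot_scale a (quot_scale b q) = quot_scale (a * b) q.
Proof. by rewrite -[q]reprK !piE scalerA. Qed.

Lemma quot_scale1 : left_id 1 quot_scale.
Proof. by move=> q; rewrite -[q]reprK !piE scale1r. Qed.

Lemma quot_scaleDr : right_distributive quot_scale +%R.
Proof. by move=> a q r; rewrite -[q]reprK -[r]reprK !piE scalerDr. Qed.

Lemma quot_scaleDl (q : Q) : {morph quot_scale^~ q : a b / a + b}.
Proof. by move=> a b; rewrite -[q]reprK !piE scalerDl. Qed.

HB.instance Definition _ := GRing.Zmodule_isLmodule.Build R Q
  quot_scaleA quot_scale1 quot_scaleDr quot_scaleDl.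

Lemma pi_quotD x y : \pi_Q (x + y) = \pi_Q x + \pi_Q y.
Proof. exact: Quotient.pi_add. Qed.

Lemma pi_quotZ k x : \pi_Q (k *: x) = k *: \pi_Q x.
Proof. exact: pi_scale. Qed.

Lemma pi_quot_linear : linear \pi_Q.
Proof. by move=> k x y; rewrite pi_quotD pi_quotZ. Qed.

End SpanQuotient.

Section LinearFun.
Variables (R : pzRingType) (U V : lmodType R) (f : U -> V).
Hypothesis f_lin : linear f.

Lemma lin_fun0 : f 0 = 0.
Proof.
have := f_lin 1 0 0; rewrite !scale1r addr0.
by move/(congr1 (fun v => v - f 0)); rewrite subrr addrK.
Qed.

Lemma lin_funD x y : f (x + y) = f x + f y.
Proof. by have := f_lin 1 x y; rewrite !scale1r. Qed.

Lemma lin_funZ k x : f (k *: x) = k *: f x.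
Proof. by have := f_lin k x 0; rewrite !addr0 lin_fun0 addr0. Qed.

Lemma lin_funN x : f (- x) = - f x.
Proof. by rewrite -scaleN1r lin_funZ scaleN1r. Qed.

Lemma lin_funB x y : f (x - y) = f x - f y.
Proof. by rewrite lin_funD lin_funN. Qed.

End LinearFun.

Lemma linear_zero (R : pzRingType) (U V : lmodType R) : linear (fun _ : U => 0 : V).
Proof. by move=> k x y; rewrite scaler0 addr0. Qed.
Arguments linear_zero {R U V}.

Lemma linear_comp (R : pzRingType) (U V W : lmodType R) (f : V -> W) (h : U -> V) :
  linear f -> linear h -> linear (f \o h).
Proof. by move=> f_lin h_lin k x y /=; rewrite (h_lin k) (f_lin k). Qed.

Section ExteriorSquare.
Variables (K : fieldType) (U L : lmodType K) (w : U -> U -> L).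
Hypothesis w_ext : is_ext_square w.

Lemma wedge_klinearl b : klinear (w^~ b).
Proof. by case: w_ext => -[]. Qed.

Lemma wedge_klinearr a : klinear (w a).
Proof. by case: w_ext => -[_ []]. Qed.

Lemma wedgeDl a b c : w (a + b) c = w a c + w b c.
Proof. exact: lin_funD (wedge_klinearl c) a b. Qed.

Lemma wedgeDr a b c : w a (b + c) = w a b + w a c.
Proof. exact: lin_funD (wedge_klinearr a) b c. Qed.

Lemma wedgeZl k a b : w (k *: a) b = k *: w a b.
Proof. exact: lin_funZ (wedge_klinearl b) k a. Qed.

Lemma wedgeZr k a b : w a (k *: b) = k *: w a b.
Proof. exact: lin_funZ (wedge_klinearr a) k b. Qed.

Lemma wedgevv a : w a a = 0.
Proof. by case: w_ext => -[_ []]. Qed.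

Lemma wedgeC a b : w b a = - w a b.
Proof.
apply/eqP; rewrite -addr_eq0 addrC; apply/eqP.
by have := wedgevv (a + b); rewrite wedgeDl !wedgeDr !wedgevv add0r addr0.
Qed.

Lemma ext_square_lift (M : lmodType K) (f : U -> U -> M) :
  alt_bilinear f -> {g : L -> M | klinear g /\ forall a b, g (w a b) = f a b}.
Proof. by move=> f_alt; apply: cid; case: w_ext => _ /(_ M f f_alt) []. Qed.

Lemma ext_square_ext (M : lmodType K) (g1 g2 : L -> M) :
  klinear g1 -> klinear g2 -> (forall a b, g1 (w a b) = g2 (w a b)) ->
  forall x, g1 x = g2 x.
Proof.
move=> g1_lin g2_lin g12; have g1_alt : alt_bilinear (fun a b => g1 (w a b)).
  split; [|split] => [b k x y | a k x y | a].
  - by rewrite (wedge_klinearl b k) (g1_lin k).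
  - by rewrite (wedge_klinearr a k) (g1_lin k).
  - by rewrite wedgevv lin_fun0.
by case: w_ext => _ /(_ M _ g1_alt) [_]; apply.
Qed.

Lemma ext_square_spanned x : x \in lin_span (fun t : U * U => w t.1 t.2).
Proof.
apply/quot_eq0P/eqP.
apply: (ext_square_ext (pi_quot_linear _) linear_zero) => a b.
by apply/eqP/quot_eq0P; apply: (lin_span_gen _ (a, b)).
Qed.

End ExteriorSquare.

Section WedgeAction.
Variables (K : fieldType) (A : comAlgType K) (L : lmodType K) (w : A -> A -> L).
Hypothesis w_ext : is_ext_square w.
Hypothesis two_neq0 : (2%:R : K) != 0.

Definition T0gen_triple (t : A * A * A) : L := T0gen w t.1.1 t.1.2 t.2.
Local Notation T0 := (lin_span T0gen_triple).
Local Notation Q := (Quotient.quot T0).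

Lemma in_T0P x : in_T0 w x <-> x \in T0.
Proof. by split=> [?|/lin_spanP //]; apply/lin_spanP. Qed.

Lemma T0gen_in_T0 x y z : T0gen w x y z \in T0.
Proof. exact: (lin_span_gen _ (x, y, z)). Qed.

Lemma half_wedge_alt_bilinear a :
  alt_bilinear (fun b c => 2^-1 *: (w (a * b) c + w b (a * c))).
Proof.
split; [|split] => [c k x y | b k x y | b] /=.
- by rewrite mulrDr -scalerAr !(wedgeDl w_ext) !(wedgeZl w_ext); lmod_ring K.
- by rewrite mulrDr -scalerAr !(wedgeDr w_ext) !(wedgeZr w_ext); lmod_ring K.
- by rewrite [w b _](wedgeC w_ext) addrN scaler0.
Qed.

(* Only modulo T0 is this an action of A: see [wactA_T0]. *)
Definition wact (a : A) : L -> L :=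
  sval (ext_square_lift w_ext (half_wedge_alt_bilinear a)).

Lemma wact_klinear a : klinear (wact a).
Proof. exact: (proj1 (svalP (ext_square_lift _ _))). Qed.

Lemma wactE a b c : wact a (w b c) = 2^-1 *: (w (a * b) c + w b (a * c)).
Proof. exact: (proj2 (svalP (ext_square_lift _ _))). Qed.

Lemma wactD a b x : wact (a + b) x = wact a x + wact b x.
Proof.
apply: (ext_square_ext w_ext (g2 := fun x => wact a x + wact b x)) => [|k y z|c e].
- exact: wact_klinear.
- by rewrite !(wact_klinear _ k); lmod_ring K.
by rewrite !wactE !mulrDl !(wedgeDl w_ext) !(wedgeDr w_ext); lmod_ring K.
Qed.

Lemma wact1 x : wact 1 x = x.
Proof.
apply: (ext_square_ext w_ext (g2 := id)) => [|//|b c]; first exact: wact_klinear.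
by rewrite wactE !mul1r; lmod_ring K.
Qed.

Lemma wact_scalar k x : wact k%:A x = k *: x.
Proof.
apply: (ext_square_ext w_ext (g2 := fun x => k *: x)) => [|l y z|b c].
- exact: wact_klinear.
- by rewrite scalerDr !scalerA mulrC.
by rewrite wactE !mulr_algl (wedgeZl w_ext) (wedgeZr w_ext); lmod_ring K.
Qed.

Lemma wact_T0gen a x y z :
  wact a (T0gen w x y z)
  = 2^-1 *: (T0gen w x (a * y) z + T0gen w x y (a * z) - T0gen w (y * z) a x).
Proof.
have wact_lin := wact_klinear a.
rewrite /T0gen !(lin_funD wact_lin) (lin_funN wact_lin) !wactE !mulr1.
wedge_ring K w (wedgeC w_ext).
Qed.

Lemma wact_T0 a : {in T0, forall x, wact a x \in T0}.
Proof.
have wact_lin := wact_klinear a.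
apply: (lin_span_ind (P := fun x => wact a x \in T0)) => [|k [[x y] z] v T0v].
  by rewrite lin_fun0 // rpred0.
rewrite (wact_lin k); apply: rpredD T0v; apply: rpredZ.
rewrite wact_T0gen; apply: rpredZ; apply: rpredB; first apply: rpredD.
all: exact: T0gen_in_T0.
Qed.

Lemma wactA_wedge a b c e :
  wact a (wact b (w c e)) - wact (a * b) (w c e)
  = (2^-1 * 2^-1) *: (T0gen w (a * b) c e + T0gen w a b (c * e)
                        - T0gen w a (b * c) e - T0gen w b (a * c) e).
Proof.
rewrite !wactE (lin_funZ (wact_klinear a)) (lin_funD (wact_klinear a)) !wactE /T0gen.
wedge_ring K w (wedgeC w_ext).
Qed.

Lemma wactA_T0 a b x : wact a (wact b x) - wact (a * b) x \in T0.
Proof.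
apply/quot_eqP/eqP.
apply: (ext_square_ext w_ext (g1 := \pi_Q \o (wact a \o wact b))
                             (g2 := \pi_Q \o wact (a * b))).
- exact: linear_comp (pi_quot_linear _) (linear_comp (wact_klinear a) (wact_klinear b)).
- exact: linear_comp (pi_quot_linear _) (wact_klinear _).
move=> c e /=; apply/eqP/quot_eqP; rewrite wactA_wedge.
apply: rpredZ; apply: rpredB; first apply: rpredB; first apply: rpredD.
all: exact: T0gen_in_T0.
Qed.

(* The A-module structure below needs both hypotheses; taking them as (unused)
   parameters of the carrier lets that structure be a canonical instance. *)
Definition T0quot (_ : is_ext_square w) (_ : (2%:R : K) != 0) : Type := Q.
Local Notation QA := (T0quot w_ext two_neq0).

HB.instance Definition _ := GRing.Zmodule.on QA.

Definition T0quot_act (a : A) (q : QA) : QA := \pi_Q (wact a (repr q)).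

Lemma T0quot_actE a x : T0quot_act a (\pi_Q x) = \pi_Q (wact a x).
Proof.
apply/eqP/quot_eqP; rewrite -(lin_funB (wact_klinear a)).
by apply: wact_T0; apply/quot_eqP; rewrite reprK.
Qed.

Lemma T0quot_actA a b q : T0quot_act a (T0quot_act b q) = T0quot_act (a * b) q.
Proof.
by elim/quotW: q => x; rewrite (T0quot_actE b) !T0quot_actE; apply/eqP/quot_eqP/wactA_T0.
Qed.

Lemma T0quot_act1 : left_id 1 T0quot_act.
Proof. by elim/quotW => x; rewrite T0quot_actE wact1. Qed.

Lemma T0quot_actDr : right_distributive T0quot_act +%R.
Proof.
move=> a q r; elim/quotW: q => x; elim/quotW: r => y.
by rewrite -pi_quotD !T0quot_actE (lin_funD (wact_klinear a)) pi_quotD.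
Qed.

Lemma T0quot_actDl q : {morph T0quot_act^~ q : a b / a + b}.
Proof. by elim/quotW: q => x a b; rewrite !T0quot_actE wactD pi_quotD. Qed.

HB.instance Definition _ := GRing.Zmodule_isLmodule.Build A QA
  T0quot_actA T0quot_act1 T0quot_actDr T0quot_actDl.

Lemma T0quot_scalar k (q : QA) : k%:A *: q = k *: (q : Q) :> Q.
Proof. by elim/quotW: q => x; rewrite [LHS]T0quot_actE wact_scalar pi_quotZ. Qed.

Definition T0quot_d (b : A) : QA := \pi_Q (w 1 b).

Lemma T0quot_d_derivation : is_derivation T0quot_d.
Proof.
split=> [k a b | a b]; rewrite /T0quot_d.
  by rewrite (wedgeDr w_ext) (wedgeZr w_ext) pi_quotD pi_quotZ T0quot_scalar.
rewrite [a *: _]T0quot_actE [b *: _]T0quot_actE -pi_quotD !wactE !mulr1.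
by congr \pi_Q; wedge_ring K w (wedgeC w_ext).
Qed.

End WedgeAction.

Section Derivations.
Variables (K : fieldType) (A : comAlgType K) (Om : lmodType A) (d : A -> Om).

Lemma derivation1 : is_derivation d -> d 1 = 0.
Proof.
case=> _ dM; have := dM 1 1; rewrite mulr1 scale1r.
by move/(congr1 (fun v => v - d 1)); rewrite subrr addrK.
Qed.

Lemma univ_diff_ext (M : lmodType A) (f1 f2 : Om -> M) :
  is_univ_diff d -> Alinear f1 -> Alinear f2 ->
  (forall a, f1 (d a) = f2 (d a)) -> forall x, f1 x = f2 x.
Proof.
move=> [[dZ dM] d_univ] f1_lin f2_lin f12.
have f1d_der : is_derivation (f1 \o d).
  split=> [k a b | a b] /=; first by rewrite dZ f1_lin.
  by rewrite dM (lin_funD f1_lin) !(lin_funZ f1_lin).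
have [_ d_uniq] := d_univ M _ f1d_der.
by move=> x; apply: d_uniq => // a; rewrite /= f12.
Qed.

End Derivations.

Lemma scale_half_double (K : fieldType) (A : comAlgType K) (M : lmodType A) (v : M) :
  (2%:R : K) != 0 -> (2^-1 : K)%:A *: (v + v) = v.
Proof.
move=> two_neq0.
rewrite -mulr2n -scaler_nat scalerA mulr_algl -(scaler_nat 2 (1 : A)) scalerA.
by rewrite mulVf // !scale1r.
Qed.

Section WedgeToDifferential.
Variables (K : fieldType) (A : comAlgType K) (L : lmodType K) (w : A -> A -> L).
Variables (Om : lmodType A) (d : A -> Om) (gamma : L -> Om).
Hypothesis w_ext : is_ext_square w.
Hypothesis two_neq0 : (2%:R : K) != 0.
Hypothesis d_der : is_derivation d.
Hypothesis gamma_lin : forall k x y, gamma (k *: x + y) = k%:A *: gamma x + gamma y.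
Hypothesis gamma_w : forall a b, gamma (w a b) = a *: d b - b *: d a.

Local Notation T0 := (lin_span (T0gen_triple w)).
Local Notation Q := (Quotient.quot T0).
Local Notation QA := (T0quot w_ext two_neq0).

Lemma gamma0 : gamma 0 = 0.
Proof.
have := gamma_lin 1 0 0; rewrite !scale1r addr0.
by move/(congr1 (fun v => v - gamma 0)); rewrite subrr addrK.
Qed.

Lemma gammaD x y : gamma (x + y) = gamma x + gamma y.
Proof. by have := gamma_lin 1 x y; rewrite !scale1r. Qed.

Lemma gammaZ k x : gamma (k *: x) = k%:A *: gamma x.
Proof. by have := gamma_lin k x 0; rewrite !addr0 gamma0 addr0. Qed.

Lemma gammaN x : gamma (- x) = - gamma x.
Proof. by rewrite -scaleN1r gammaZ scaleNr scale1r scaleN1r. Qed.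

Lemma gammaB x y : gamma (x - y) = gamma x - gamma y.
Proof. by rewrite gammaD gammaN. Qed.

Lemma gamma_T0gen a b c : gamma (T0gen w a b c) = 0.
Proof.
have dM := d_der.2.
by rewrite /T0gen gammaD gammaN !gammaD !gamma_w !dM derivation1 //; lmod_ring A.
Qed.

Lemma gamma_T0 : {in T0, forall x, gamma x = 0}.
Proof.
apply: (lin_span_ind (P := fun x => gamma x = 0)) => [|k [[a b] c] x /= gx0].
  exact: gamma0.
by rewrite gamma_lin gx0 gamma_T0gen scaler0 addr0.
Qed.

Lemma gamma_wact_wedge a b c : gamma (wact w_ext a (w b c)) = a *: gamma (w b c).
Proof.
have dM := d_der.2.
rewrite wactE gammaZ gammaD !gamma_w !dM -[RHS](scale_half_double _ two_neq0).
by congr (_ *: _); lmod_ring A.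
Qed.

Lemma gamma_wact a x : gamma (wact w_ext a x) = a *: gamma x.
Proof.
have wact_lin := wact_klinear w_ext a.
move: x (ext_square_spanned w_ext x).
apply: (lin_span_ind (P := fun x => gamma (wact w_ext a x) = a *: gamma x)).
  by rewrite lin_fun0 // gamma0 scaler0.
move=> k [b c] x /= IHx.
by rewrite (wact_lin k) !gamma_lin IHx gamma_wact_wedge; lmod_ring A.
Qed.

Definition T0quot_gamma (q : QA) : Om := gamma (repr q).

Lemma T0quot_gammaE x : T0quot_gamma (\pi_Q x) = gamma x.
Proof.
apply/eqP; rewrite -subr_eq0 -gammaB; apply/eqP/gamma_T0.
by apply/quot_eqP; rewrite reprK.
Qed.

Lemma T0quot_gamma_Alinear : Alinear T0quot_gamma.
Proof.
move=> a q r; elim/quotW: q => x; elim/quotW: r => y.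
by rewrite [a *: _]T0quot_actE -pi_quotD !T0quot_gammaE gammaD gamma_wact.
Qed.

Lemma T0quot_gamma_d a : T0quot_gamma (T0quot_d w_ext two_neq0 a) = d a.
Proof. by rewrite T0quot_gammaE gamma_w derivation1 // scaler0 subr0 scale1r. Qed.

Lemma psi_gamma (psi : Om -> QA) :
    Alinear psi -> (forall a, psi (d a) = T0quot_d w_ext two_neq0 a) ->
  forall x, psi (gamma x) = \pi_Q x :> Q.
Proof.
move=> psi_lin psi_d x.
apply: (ext_square_ext w_ext (g1 := fun x => psi (gamma x) : Q)) => [k y z|k y z|b c] /=.
- by rewrite gamma_lin psi_lin T0quot_scalar.
- by rewrite pi_quotD pi_quotZ.
rewrite gamma_w (lin_funB psi_lin) !(lin_funZ psi_lin) !psi_d.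
rewrite ![_ *: T0quot_d _ _ _]T0quot_actE -(lin_funB (pi_quot_linear _)) !wactE !mulr1.
by congr \pi_Q; wedge_ring K w (wedgeC w_ext).
Qed.

End WedgeToDifferential.

Theorem lemma1p1 (K : fieldType) (two_unit : (2%:R : K) != 0)
    (A : comAlgType K)
    (L : lmodType K) (w : A -> A -> L) (HL : is_ext_square w)
    (Om : lmodType A) (d : A -> Om) (HOm : is_univ_diff d)
    (gamma : L -> Om)
    (gamma_lin : forall (k : K) (x y : L),
        gamma (k *: x + y) = (k%:A) *: gamma x + gamma y)
    (gamma_w : forall a b : A, gamma (w a b) = a *: d b - b *: d a) :
  (forall y : Om, exists x : L, gamma x = y) /\
  (forall x : L, gamma x = 0 <-> in_T0 w x).
Proof.
have d_der := HOm.1.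
have [[psi [psi_lin psi_d]] _] := HOm.2 _ _ (T0quot_d_derivation HL two_unit).
have gamma_psi y : T0quot_gamma gamma (psi y) = y.
  apply: (univ_diff_ext HOm (f1 := fun y => T0quot_gamma gamma (psi y)) (f2 := id)) => //.
  - by move=> a u v; rewrite (psi_lin a) (T0quot_gamma_Alinear d_der gamma_lin gamma_w).
  - by move=> a /=; rewrite psi_d (T0quot_gamma_d _ _ d_der).
split=> [y | x]; first by exists (repr (psi y)); apply: gamma_psi.
split=> [gx0 | /in_T0P T0x]; last exact: (gamma_T0 d_der gamma_lin gamma_w T0x).
apply/in_T0P/quot_eq0P/eqP.
by rewrite -(psi_gamma gamma_lin gamma_w psi_lin psi_d) gx0 (lin_fun0 psi_lin).
Qed.
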